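(* Let $d\ge4$ be even. Let $C^0=\{L^0_{a,a}\}_{a=0}^{d-1}$ and $C^s=\{L^s_{1,i}\}_{i=0}^{d-1}$ for $s=1,2$. Then $C^0\cup C^1\cup C^2$ consists of $3d$ pairwise disjoint lines on ${\rm F}_d$.
   Context: ${\rm F}_d\subset\mathbb{P}^3(\mathbb{C})$ is the surface $x^d-y^d-z^d+w^d=0$. Fix a primitive $d$-th root of unity $\eta$ and any $v\in\mathbb{C}$ with $v^d=-1$. For $k,i\in\{0,\dots,d-1\}$ define the lines $L^0_{k,i}:\{y=\eta^i x,\ w=\eta^k z\}$, $L^1_{k,i}:\{x=\eta^{k+i}z,\ y=\eta^i w\}$, $L^2_{k,i}:\{x=v\eta^i w,\ y=v\eta^{k+i}z\}$, all lying on ${\rm F}_d$. *)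

From HB Require Import structures.
From mathcomp Require Import all_boot all_order all_algebra.
From mathcomp Require Import complex.
From mathcomp Require Import Rstruct.
From Stdlib Require Import Reals.

Set Implicit Arguments.
Unset Strict Implicit.
Unset Printing Implicit Defensive.
Import Order.TTheory GRing.Theory Num.Theory.
Local Open Scope ring_scope.

Definition C : numClosedFieldType := (complex R : numClosedFieldType).

(* Homogeneous coordinates (x, y, z, w) of a point of P^3(C); a point of
   P^3 is represented by a nonzero quadruple (up to scaling). All the
   subsets below are defined by homogeneous equations, hence are cones. *)
Definition hpt := (C * C * C * C)%type.
Definition px (p : hpt) : C := p.1.1.1.
Definition py (p : hpt) : C := p.1.1.2.
Definition pz (p : hpt) : C := p.1.2.
Definition pw (p : hpt) : C := p.2.
Definition nonzero_pt (p : hpt) : Prop := p <> (0, 0, 0, 0).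

Definition on_Fd (d : nat) (p : hpt) : Prop :=
  px p ^+ d - py p ^+ d - pz p ^+ d + pw p ^+ d = 0.

Definition L0 (eta : C) (k i : nat) (p : hpt) : Prop :=
  py p = eta ^+ i * px p /\ pw p = eta ^+ k * pz p.
Definition L1 (eta : C) (k i : nat) (p : hpt) : Prop :=
  px p = eta ^+ (k + i) * pz p /\ py p = eta ^+ i * pw p.
Definition L2 (eta v : C) (k i : nat) (p : hpt) : Prop :=
  px p = v * eta ^+ i * pw p /\ py p = v * eta ^+ (k + i) * pz p.

Definition confLine (eta v : C) (s : 'I_3) (i : nat) (p : hpt) : Prop :=
  match nat_of_ord s with
  | 0 => L0 eta i i p
  | 1 => L1 eta 1 i p
  | _ => L2 eta v 1 i p
  end.

(* A common point of two of these lines satisfies two pairs of linear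
   relations, and eliminating coordinates leaves a single equation c z = c' z
   with c != c', forcing the point to vanish.  For two lines of one family,
   c and c' are distinct powers of the primitive root eta.  Between families
   the obstructions are eta != 1, eta^(2i) != eta (no i solves 2i = 1 modulo
   the even d), and eta^(2i) != (v eta^j)^2: raising both sides to the power
   d/2 would give 1 = v^d = -1. *)

From HB Require Import structures.
From mathcomp Require Import all_boot all_order all_algebra.
From mathcomp Require Import ring.

Set Implicit Arguments.
Unset Strict Implicit.
Unset Printing Implicit Defensive.
Import GRing.Theory.
Local Open Scope ring_scope.

Lemma eq_mulr_neq_eq0 (R : idomainType) (a b z : R) :
  a != b -> a * z = b * z -> z = 0.
Proof.
move=> /negPf a_neq_b /eqP; rewrite -subr_eq0 -mulrBl mulf_eq0 subr_eq0 a_neq_b.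
by move/eqP.
Qed.

Lemma sqr_neq_of_unity_antiunity (R : idomainType) (n : nat) (x y : R) :
  ~~ odd n -> 2%:R != 0 :> R -> x ^+ n = 1 -> y ^+ n = -1 -> x ^+ 2 != y ^+ 2.
Proof.
move=> n_even two_neq0 x_n y_n; apply: contra_neq two_neq0.
move=> /(congr1 (fun a => a ^+ n./2)); rewrite -!exprM mul2n even_halfK //.
by rewrite x_n y_n => one_eqN1; rewrite mulr2n {2}one_eqN1 subrr.
Qed.

Section PrimitiveRoot.
Variables (R : idomainType) (n : nat) (z : R).
Hypothesis prim_z : n.-primitive_root z.

Lemma eq_prim_root_exprD k a b : (a < n)%N -> (b < n)%N ->
  (z ^+ (k + a) == z ^+ (k + b)) = (a == b).
Proof.
by move=> a_lt b_lt; rewrite (eq_prim_root_expr prim_z) eqn_modDl !modn_small.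
Qed.

Lemma prim_expr_double_neq i : ~~ odd n -> z ^+ (i + i) != z.
Proof.
move=> n_even; rewrite -[X in _ != X]expr1 (eq_prim_root_expr prim_z).
apply: contraTneq isT => /(congr1 (modn^~ 2)); rewrite /= !modn_dvdm ?dvdn2 //.
by rewrite addnn -muln2 modnMl.
Qed.

Lemma prim_expr_sqr_neq_antiunity (u : R) i j : ~~ odd n -> u ^+ n = -1 ->
  (z ^+ i) ^+ 2 != (u * z ^+ j) ^+ 2.
Proof.
move=> n_even u_n; apply: (sqr_neq_of_unity_antiunity n_even).
- by apply: (prim_root_dvd_eq0 prim_z); rewrite dvdn2.
- by rewrite exprAC (prim_expr_order prim_z) expr1n.
- by rewrite exprMn exprAC (prim_expr_order prim_z) expr1n mulr1.
Qed.

End PrimitiveRoot.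

Section LinesOnFd.
Variables (d : nat) (eta v : C) (k i : nat) (p : hpt).
Hypotheses (eta_d : eta ^+ d = 1) (v_d : v ^+ d = -1).

Let eta_expr_d m : (eta ^+ m) ^+ d = 1.
Proof. by rewrite exprAC eta_d expr1n. Qed.

Lemma L0_on_Fd : L0 eta k i p -> on_Fd d p.
Proof.
case: p => [[[x y] z] w]; rewrite /L0 /on_Fd /px /py /pz /pw /= => -[-> ->].
by rewrite !exprMn !eta_expr_d !mul1r subrr sub0r addNr.
Qed.

Lemma L1_on_Fd : L1 eta k i p -> on_Fd d p.
Proof.
case: p => [[[x y] z] w]; rewrite /L1 /on_Fd /px /py /pz /pw /= => -[-> ->].
by rewrite !exprMn !eta_expr_d !mul1r addrAC subrK subrr.
Qed.

Lemma L2_on_Fd : L2 eta v k i p -> on_Fd d p.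
Proof.
case: p => [[[x y] z] w]; rewrite /L2 /on_Fd /px /py /pz /pw /= => -[-> ->].
by rewrite !exprMn !eta_expr_d v_d !mulr1 !mulN1r opprK addrK addNr.
Qed.

End LinesOnFd.

Section Disjointness.
Variables (eta v : C) (k i l j : nat) (p : hpt).

Lemma L0_L0_disjoint : eta ^+ i != eta ^+ j -> eta ^+ k != eta ^+ l ->
  L0 eta k i p -> L0 eta l j p -> p = (0, 0, 0, 0).
Proof.
case: p => [[[x y] z] w]; rewrite /L0 /px /py /pz /pw /= => ij kl [y1 w1] [y2 w2].
have x0 : x = 0 by apply: (eq_mulr_neq_eq0 ij); rewrite -y1 -y2.
have z0 : z = 0 by apply: (eq_mulr_neq_eq0 kl); rewrite -w1 -w2.
by rewrite y1 w1 x0 z0 !mulr0.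
Qed.

Lemma L1_L1_disjoint : eta ^+ (k + i) != eta ^+ (l + j) -> eta ^+ i != eta ^+ j ->
  L1 eta k i p -> L1 eta l j p -> p = (0, 0, 0, 0).
Proof.
case: p => [[[x y] z] w]; rewrite /L1 /px /py /pz /pw /= => kilj ij [x1 y1] [x2 y2].
have z0 : z = 0 by apply: (eq_mulr_neq_eq0 kilj); rewrite -x1 -x2.
have w0 : w = 0 by apply: (eq_mulr_neq_eq0 ij); rewrite -y1 -y2.
by rewrite x1 y1 z0 w0 !mulr0.
Qed.

Lemma L2_L2_disjoint : v != 0 -> eta ^+ i != eta ^+ j ->
  eta ^+ (k + i) != eta ^+ (l + j) ->
  L2 eta v k i p -> L2 eta v l j p -> p = (0, 0, 0, 0).
Proof.
case: p => [[[x y] z] w]; rewrite /L2 /px /py /pz /pw /=.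
move=> v_neq0 ij kilj [x1 y1] [x2 y2].
have w0 : w = 0.
  apply: (@eq_mulr_neq_eq0 _ (v * eta ^+ i) (v * eta ^+ j)).
    by rewrite (inj_eq (mulfI v_neq0)).
  by rewrite -x1 -x2.
have z0 : z = 0.
  apply: (@eq_mulr_neq_eq0 _ (v * eta ^+ (k + i)) (v * eta ^+ (l + j))).
    by rewrite (inj_eq (mulfI v_neq0)).
  by rewrite -y1 -y2.
by rewrite x1 y1 z0 w0 !mulr0.
Qed.

Lemma L0_L1_disjoint : eta != 0 -> eta ^+ (i + l) != eta ^+ k ->
  L0 eta k i p -> L1 eta l j p -> p = (0, 0, 0, 0).
Proof.
case: p => [[[x y] z] w]; rewrite /L0 /L1 /px /py /pz /pw /=.
move=> eta_neq0 neq [y1 w1] [x2 y2].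
have z0 : z = 0.
  apply: (eq_mulr_neq_eq0 neq); apply: (mulfI (expf_neq0 j eta_neq0)).
  transitivity (eta ^+ i * (eta ^+ (l + j) * z)); first by rewrite !exprD; ring.
  by rewrite -x2 -y1 y2 w1; ring.
by rewrite y1 w1 x2 z0 !mulr0.
Qed.

Lemma L0_L2_disjoint : eta != 0 -> v != 0 -> eta ^+ (i + k) != eta ^+ l ->
  L0 eta k i p -> L2 eta v l j p -> p = (0, 0, 0, 0).
Proof.
case: p => [[[x y] z] w]; rewrite /L0 /L2 /px /py /pz /pw /=.
move=> eta_neq0 v_neq0 neq [y1 w1] [x2 y2].
have z0 : z = 0.
  apply: (eq_mulr_neq_eq0 neq).
  apply: (mulfI (mulf_neq0 v_neq0 (expf_neq0 j eta_neq0))).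
  transitivity (eta ^+ i * (v * eta ^+ j * (eta ^+ k * z))).
    by rewrite exprD; ring.
  by rewrite -w1 -x2 -y1 y2 exprD; ring.
by rewrite y1 w1 x2 w1 z0 !mulr0.
Qed.

Lemma L1_L2_disjoint : eta != 0 ->
  (eta ^+ i) ^+ 2 * eta ^+ k != (v * eta ^+ j) ^+ 2 * eta ^+ l ->
  L1 eta k i p -> L2 eta v l j p -> p = (0, 0, 0, 0).
Proof.
case: p => [[[x y] z] w]; rewrite /L1 /L2 /px /py /pz /pw /=.
move=> eta_neq0 neq [x1 y1] [x2 y2].
have z0 : z = 0.
  apply: (eq_mulr_neq_eq0 neq).
  transitivity (eta ^+ i * (eta ^+ (k + i) * z)); first by rewrite exprD; ring.
  transitivity (v * eta ^+ j * (eta ^+ i * w)); first by rewrite -x1 x2; ring.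
  by rewrite -y1 y2 exprD; ring.
have w0 : w = 0.
  by apply: (mulfI (expf_neq0 i eta_neq0)); rewrite -y1 y2 z0 !mulr0.
by rewrite x1 y1 z0 w0 !mulr0.
Qed.

End Disjointness.

Section Configuration.
Variables (d : nat) (eta v : C).
Hypotheses (d_even : ~~ odd d) (prim : d.-primitive_root eta) (v_d : v ^+ d = -1).

Let d_gt0 : (0 < d)%N := prim_order_gt0 prim.

Let d_gt1 : (1 < d)%N.
Proof. by rewrite ltn_neqAle d_gt0 andbT; apply: contraNneq d_even => <-. Qed.

Let eta_neq0 : eta != 0.
Proof. by rewrite (prim_root_eq0 prim) gtn_eqF. Qed.

Let v_neq0 : v != 0.
Proof.
apply: contra_eq_neq v_d => ->; rewrite expr0n gtn_eqF //.
by rewrite eq_sym oppr_eq0 oner_eq0.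
Qed.

Let eta_exprD_neq k (i j : 'I_d) : i != j -> eta ^+ (k + i) != eta ^+ (k + j).
Proof. by rewrite (eq_prim_root_exprD prim). Qed.

Lemma confLine_on_Fd (s : 'I_3) i p : confLine eta v s i p -> on_Fd d p.
Proof.
have eta_d := prim_expr_order prim.
case: s => [[|[|?]] ?].
- exact: L0_on_Fd eta_d.
- exact: L1_on_Fd eta_d.
- exact: L2_on_Fd eta_d v_d.
Qed.

Lemma confLine_disjoint_same (s : 'I_3) (i j : 'I_d) p : i != j ->
  confLine eta v s i p -> confLine eta v s j p -> p = (0, 0, 0, 0).
Proof.
move=> ij; have eta_ij k := eta_exprD_neq k ij.
case: s => [[|[|?]] ?].
- exact: L0_L0_disjoint (eta_ij 0%N) (eta_ij 0%N).
- exact: L1_L1_disjoint (eta_ij 1%N) (eta_ij 0%N).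
- exact: L2_L2_disjoint v_neq0 (eta_ij 0%N) (eta_ij 1%N).
Qed.

Lemma confLine_disjoint_lt (s t : 'I_3) (i j : 'I_d) p : (s < t)%N ->
  confLine eta v s i p -> confLine eta v t j p -> p = (0, 0, 0, 0).
Proof.
case: s t => [[|[|[|?]]] ?] [[|[|[|?]]] ?] //= _.
- apply: L0_L1_disjoint eta_neq0 _.
  by rewrite -[X in _ != _ ^+ X]addn0 (eq_prim_root_exprD prim).
- apply: L0_L2_disjoint eta_neq0 v_neq0 _.
  exact: prim_expr_double_neq prim _ d_even.
- apply: L1_L2_disjoint eta_neq0 _.
  by rewrite (inj_eq (mulIf eta_neq0)) (prim_expr_sqr_neq_antiunity prim).
Qed.

End Configuration.

Theorem proposition4p1 (d : nat) (eta v : C) :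
  (4 <= d)%N -> ~~ odd d ->
  d.-primitive_root eta -> v ^+ d = -1 ->
  (forall (s : 'I_3) (i : 'I_d) (p : hpt), confLine eta v s i p -> on_Fd d p) /\
  (forall (s t : 'I_3) (i j : 'I_d), (s, i) <> (t, j) ->
     forall p : hpt, nonzero_pt p ->
       confLine eta v s i p -> confLine eta v t j p -> False).
Proof.
move=> _ d_even prim v_d.
split=> [s i p | s t i j si_neq_tj p p_neq0 p_si p_tj].
  exact: (confLine_on_Fd prim v_d).
apply: p_neq0; case: (ltngtP s t) => [s_lt_t | t_lt_s | /val_inj s_eq_t].
- exact: (confLine_disjoint_lt d_even prim v_d s_lt_t p_si p_tj).
- exact: (confLine_disjoint_lt d_even prim v_d t_lt_s p_tj p_si).
- subst t; apply: (confLine_disjoint_same prim v_d _ p_si p_tj).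
  by apply: contra_not_neq si_neq_tj => ->.
Qed.
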